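(* For every positive integer $m$ and prime power $q$, $\sigma(Sp_{2m}(q))=\sigma(S_{2m}(q))$, where $S_{2m}(q)=PSp_{2m}(q)$ is the quotient of $Sp_{2m}(q)$ by its center.
   Context: The covering number $\sigma(G)$ of a group $G$ is the least positive integer $n$ such that $G$ is the union of $n$ proper subgroups, with $\sigma(G)=\infty$ if no finite such union exists. $Sp_{2m}(q)$ is the symplectic group of a nondegenerate alternating form on $\mathbb{F}_q^{2m}$. *)

From HB Require Import structures.
From mathcomp Require Import all_boot all_order all_algebra all_fingroup all_solvable.
From Stdlib Require Import ClassicalEpsilon.
Set Implicit Arguments. Unset Strict Implicit. Unset Printing Implicit Defensive.
Import GRing.Theory.

Local Open Scope group_scope.

(* Covering number of a finite group G: the least n such that G is the union
   of n proper subgroups; None encodes sigma(G) = infinity. *)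
Definition covered_byb (gT : finGroupType) (G : {set gT}) (n : nat) : bool :=
  [exists Hs : {ffun 'I_n -> {group gT}},
     [forall i, Hs i \proper G] && (G \subset \bigcup_(i < n) Hs i)].

Definition covering_number (gT : finGroupType) (G : {set gT}) : option nat :=
  match excluded_middle_informative (exists n, covered_byb G n) with
  | left H => Some (ex_minn H)
  | right _ => None
  end.

(* Standard nondegenerate alternating form on F^(2k): matrix [[0, I_k], [-I_k, 0]],
   written entrywise on 'M_n (used with n = 2k). *)
Definition symJ (F : finFieldType) (k n : nat) : 'M[F]_n :=
  \matrix_(i < n, j < n)
    (if (i < k)%N && (j == (i + k)%N :> nat) then 1
     else if (k <= i)%N && (i == (j + k)%N :> nat) then -1 else 0)%R.

Definition Sp_set (F : finFieldType) (k : nat) : {set {'GL_(k.*2)[F]}} :=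
  [set g : {'GL_(k.*2)[F]} |
     (GLval g *m symJ F k _ *m (GLval g)^T == symJ F k _)%R].

Lemma Sp_group_set (F : finFieldType) (k : nat) : group_set (Sp_set F k).
Proof.
apply/group_setP; split.
  by rewrite inE /= trmx1 mul1mx mulmx1.
move=> x y; rewrite !inE /= => /eqP Hx /eqP Hy.
rewrite trmx_mul !mulmxA -(mulmxA _ (GLval y)) -(mulmxA _ _ (GLval y)^T) Hy.
by apply/eqP; exact: Hx.
Qed.

Canonical Sp_group (F : finFieldType) (k : nat) := Group (Sp_group_set F k).

Definition PSp_group (F : finFieldType) (k : nat) :=
  (Sp_group F k / 'Z(Sp_group F k))%G.

From mathcomp Require Import all_boot all_order all_algebra all_fingroup all_solvable.
From mathcomp Require Import zify ring.

(* Call N "supplement-free" in G when every subgroup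
   H of G with G = N H is already G (for N normal this says N <= Phi(G)).
   A covering of G/N by proper subgroups always lifts to G by preimages;
   conversely the images in G/N of the members of a covering of G cover
   G/N, and they stay proper when N is supplement-free, since H/N = G/N
   means G = N H.  Hence G and G/N have the same covering number.  A central
   subgroup N is supplement-free as soon as N has exponent dividing e and
   every element of N is an e-th power g^e of some g in G: writing g = z h
   with z in N and h in H gives g^e = h^e in H.

   A matrix commuting with the symplectic transvections
   1 + E_{r,r'} and 1 + E_{i,j'} + E_{j,i'} (r' the index paired with r by
   the Gram matrix J) is scalar, and a scalar symplectic matrix is +1 or -1.
   So Z(Sp_2k(F)) = {1, -1} with -1 = J^2 and J itself symplectic, which
   makes the centre supplement-free with e = 2. *)

Set Implicit Arguments. Unset Strict Implicit. Unset Printing Implicit Defensive.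
Import GRing.Theory.

Section CoveringQuotient.
Local Open Scope group_scope.
Variable gT : finGroupType.
Implicit Types G N : {group gT}.

Definition supplement_free (N G : {set gT}) : Prop :=
  forall H : {group gT}, H \subset G -> G \subset N * H -> G \subset H.

Lemma covered_quotient G N n :
  G \subset 'N(N) -> supplement_free N G -> covered_byb G n -> covered_byb (G / N) n.
Proof.
move=> nNG suppN /existsP[Hs /andP[/forallP properHs coverG]].
apply/existsP; exists [ffun i => (Hs i / N)%G]; apply/andP; split.
  apply/forallP=> i; rewrite ffunE /=.
  have /andP[sHG not_sGH] := properHs i.
  rewrite properE quotientS //= quotientSK //.
  by apply: contra not_sGH; apply: suppN.
apply/subsetP=> _ /morphimP[x Nx Gx ->].
have /bigcupP[i _ Hix] := subsetP coverG x Gx.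
by apply/bigcupP; exists i => //; rewrite ffunE mem_quotient.
Qed.

Lemma covered_coset_preimage G N n :
  G \subset 'N(N) -> covered_byb (G / N) n -> covered_byb G n.
Proof.
move=> nNG /existsP[Ks /andP[/forallP properKs coverGN]].
apply/existsP; exists [ffun i => (G :&: coset N @*^-1 (Ks i))%G]; apply/andP; split.
  apply/forallP=> i; rewrite ffunE /= properE subsetIl /=.
  have /andP[_ not_sGNK] := properKs i.
  apply: contra not_sGNK => sGpre.
  by rewrite -(cosetpreK (Ks i)) quotientS // (subset_trans sGpre) ?subsetIr.
apply/subsetP=> x Gx.
have /bigcupP[i _ Kix] := subsetP coverGN (coset N x) (mem_quotient N Gx).
apply/bigcupP; exists i => //.
by rewrite ffunE /= inE Gx mem_morphpre // (subsetP nNG).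
Qed.

Lemma covering_number_eq (rT : finGroupType) (A : {set gT}) (B : {set rT}) :
  covered_byb A =1 covered_byb B -> covering_number A = covering_number B.
Proof.
move=> eqAB; rewrite /covering_number.
case: ClassicalEpsilon.excluded_middle_informative => [exA|noA];
case: ClassicalEpsilon.excluded_middle_informative => [exB|noB] //.
- by congr Some; apply: eq_ex_minn.
- by case: noB; have [n An] := exA; exists n; rewrite -eqAB.
- by case: noA; have [n Bn] := exB; exists n; rewrite eqAB.
Qed.

Lemma covering_number_quotient G N :
  G \subset 'N(N) -> supplement_free N G -> covering_number G = covering_number (G / N).
Proof.
move=> nNG suppN; apply: covering_number_eq => n; apply/idP/idP.
  exact: covered_quotient.
exact: covered_coset_preimage.
Qed.

Lemma central_powers_supplement_free G N e :
  N \subset 'Z(G) ->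
  (forall z, z \in N -> z ^+ e = 1 /\ exists2 g, g \in G & z = g ^+ e) ->
  supplement_free N G.
Proof.
move=> sNZ Npow H sHG sGNH.
have NinH z : z \in N -> z \in H.
  case/Npow=> _ [g Gg ->].
  have /mulsgP[y h Ny Hh ->] := subsetP sGNH g Gg.
  have /centerP[_ cGy] := subsetP sNZ y Ny.
  have cyh : commute y h := cGy h (subsetP sHG h Hh).
  by rewrite expgMn // (proj1 (Npow y Ny)) mul1g groupX.
apply/subsetP=> g Gg; have /mulsgP[z h Nz Hh ->] := subsetP sGNH g Gg.
exact: groupM (NinH z Nz) Hh.
Qed.

End CoveringQuotient.

Section SymplecticMatrices.
Local Open Scope ring_scope.
Variables (F : finFieldType) (m : nat).
Local Notation k := m.+1.
Local Notation n := m.*2.+2.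
Local Notation J := (symJ F k n).

Definition symplectic (M : 'M[F]_n) : Prop := M *m J *m M^T = J.

Definition partner (r : 'I_n) : 'I_n :=
  inord (if (r < k)%N then (r + k)%N else (r - k)%N).
Definition Jsign (r : 'I_n) : F := if (r < k)%N then 1 else -1.

Lemma ord_lt_kk (r : 'I_n) : (r < k + k)%N.
Proof. by rewrite addnn. Qed.

Lemma partner_val r : partner r = (if (r < k)%N then (r + k)%N else (r - k)%N) :> nat.
Proof. by rewrite inordK //; have := ord_lt_kk r; case: ifP; lia. Qed.

Lemma partnerK : involutive partner.
Proof.
move=> r; apply: val_inj; rewrite /= !partner_val.
by have := ord_lt_kk r; case: (ltnP r k) => ? ?; case: ifP; lia.
Qed.

Lemma partner_lt r : (partner r < k)%N = ~~ (r < k)%N.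
Proof. by rewrite partner_val; have := ord_lt_kk r; case: (ltnP r k); lia. Qed.

Lemma partner_neq r : (partner r == r) = false.
Proof.
by apply/negbTE/eqP => pr_r; have := partner_lt r; rewrite pr_r; case: (r < k)%N.
Qed.

Lemma Jsign_partner r : Jsign (partner r) = - Jsign r.
Proof. by rewrite /Jsign partner_lt; case: (r < k)%N; rewrite ?opprK. Qed.

Lemma J_row r l : J r l = Jsign r * (l == partner r)%:R.
Proof.
have -> : (l == partner r) = (l == (if (r < k)%N then (r + k)%N else (r - k)%N) :> nat).
  by rewrite -val_eqE /= partner_val.
rewrite /symJ mxE /Jsign; have := ord_lt_kk r; have := ord_lt_kk l.
case: (ltnP r k) => r_k /= ? ?; first by case: eqP; rewrite ?mul1r.
have -> : (r == (l + k)%N :> nat) = (l == (r - k)%N :> nat) by apply/eqP/eqP; lia.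
by case: eqP; rewrite ?mulr1 ?mulr0.
Qed.

Lemma J_col l s : J l s = - Jsign s * (l == partner s)%:R.
Proof.
rewrite J_row; have -> : (s == partner l) = (l == partner s).
  by apply/eqP/eqP => ->; rewrite partnerK.
by case: eqP => [->|]; rewrite ?mulr0 // Jsign_partner.
Qed.

Lemma mulJmx (A : 'M[F]_n) r s : (J *m A) r s = Jsign r * A (partner r) s.
Proof.
rewrite mxE (bigD1 (partner r)) //= big1 ?addr0; first by rewrite J_row eqxx mulr1.
by move=> l /negbTE nl; rewrite J_row nl mulr0 mul0r.
Qed.

Lemma J_sqr : J *m J = -1.
Proof.
apply/matrixP=> r s; rewrite mulJmx J_row Jsign_partner partnerK !mxE mulrA.
by rewrite /Jsign (eq_sym s); case: (r < k)%N; case: (r == s);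
  rewrite ?mulr1n ?mulr0n ?mulr1 ?mulr0 ?mul1r ?mulN1r ?opprK ?oppr0.
Qed.

Lemma J_tr : J^T = - J.
Proof. by apply/matrixP=> r s; rewrite [LHS]mxE [RHS]mxE J_row J_col mulNr opprK. Qed.

Lemma J_symplectic : symplectic J.
Proof. by rewrite /symplectic J_tr J_sqr mulmxN mulNmx mul1mx opprK. Qed.

(* Every symplectic matrix is invertible: M^-1 = - J M^T J. *)
Lemma symplectic_unit (M : 'M[F]_n) : symplectic M -> M \in unitmx.
Proof.
move=> spM; have [] // := @mulmx1_unit _ _ M (J *m M^T *m - J).
by rewrite !mulmxA spM mulmxN J_sqr opprK.
Qed.

Lemma mxE_add (A B : 'M[F]_n) x y : (A + B) x y = A x y + B x y.
Proof. by rewrite mxE. Qed.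

Lemma mul_delta_mx (A : 'M[F]_n) (a b r s : 'I_n) :
  (delta_mx a b *m A) r s = (r == a)%:R * A b s.
Proof.
rewrite mxE (bigD1 b) //= big1 ?addr0; first by rewrite mxE eqxx andbT.
by move=> l /negbTE nl; rewrite mxE nl andbF mul0r.
Qed.

Lemma mul_mx_delta (A : 'M[F]_n) (a b r s : 'I_n) :
  (A *m delta_mx a b) r s = A r a * (s == b)%:R.
Proof.
rewrite mxE (bigD1 a) //= big1 ?addr0; first by rewrite mxE eqxx.
by move=> l /negbTE nl; rewrite mxE nl mulr0.
Qed.

Lemma symplectic_add1 (N : 'M[F]_n) :
  N *m J + (J *m N^T + N *m J *m N^T) = 0 -> symplectic (1%:M + N).
Proof.
move=> eqN; rewrite /symplectic linearD /= trmx1 mulmxDl mul1mx !mulmxDr !mulmx1.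
by rewrite mulmxDl -addrA eqN addr0.
Qed.

Lemma transvection_symplectic r : symplectic (1%:M + delta_mx r (partner r)).
Proof.
apply: symplectic_add1; rewrite trmx_delta -mulmxA.
apply/matrixP=> x y; rewrite !mxE_add [RHS]mxE !mul_delta_mx !mul_mx_delta.
rewrite (J_row (partner r) y) (J_col x (partner r)) (J_row (partner r) (partner r)).
rewrite !partnerK partner_neq !mulr0 mul0r mulr0 addr0.
by case: (x == r); case: (y == r);
  rewrite ?mulr0 ?mul0r ?mulr1 ?mul1r ?addr0 ?mulrN ?mulNr ?subrr ?oppr0.
Qed.

Lemma partner_first_half (a b : 'I_n) :
  (a < k)%N -> (b < k)%N -> (partner b == a) = false.
Proof. by move=> a_k b_k; apply/negbTE/eqP => pb_a; have := partner_lt b; rewrite pb_a a_k b_k. Qed.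

Lemma Jsign_first_half (a : 'I_n) : (a < k)%N -> Jsign a = 1.
Proof. by rewrite /Jsign => ->. Qed.

Lemma pair_transvection_symplectic (i j : 'I_n) : (i < k)%N -> (j < k)%N ->
  symplectic (1%:M + (delta_mx i (partner j) + delta_mx j (partner i))).
Proof.
move=> i_k j_k; apply: symplectic_add1; rewrite linearD /= !trmx_delta -mulmxA.
rewrite !(mulmxDl, mulmxDr); apply/matrixP=> x y.
rewrite !mxE_add [RHS]mxE !mul_delta_mx !mul_mx_delta.
rewrite (J_col x (partner j)) (J_col x (partner i)) !J_row !partnerK.
rewrite !partner_first_half // !Jsign_partner !Jsign_first_half //.
move: ((x == i)%:R : F) ((x == j)%:R : F) ((y == i)%:R : F) ((y == j)%:R : F).
by move=> a b c d; rewrite !mulr0 ?addr0 !mulN1r !opprK !mul1r addrC !addrA; ring.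
Qed.

Lemma commute_add1 (Z N : 'M[F]_n) :
  Z *m (1%:M + N) = (1%:M + N) *m Z -> Z *m N = N *m Z.
Proof. by rewrite mulmxDr mulmxDl mulmx1 mul1mx => /addrI. Qed.

(* A matrix commuting with all E_{r, partner r} and all
   E_{i, partner j} + E_{j, partner i} (i, j < k) is scalar: the former kill
   the off-diagonal entries and identify Z r r with Z (partner r) (partner r),
   the latter identify the diagonal entries of the first half. *)
Lemma commute_transvections_scalar (Z : 'M[F]_n) :
  (forall r, Z *m delta_mx r (partner r) = delta_mx r (partner r) *m Z) ->
  (forall i j : 'I_n, (i < k)%N -> (j < k)%N ->
     Z *m (delta_mx i (partner j) + delta_mx j (partner i)) =
     (delta_mx i (partner j) + delta_mx j (partner i)) *m Z) ->
  Z = (Z ord0 ord0)%:M.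
Proof.
move=> cZ1 cZ2.
have offdiag x y : x != y -> Z x y = 0.
  move=> /negbTE nxy; have := congr1 (fun M : 'M[F]_n => M x (partner y)) (cZ1 y).
  by rewrite /= mul_mx_delta mul_delta_mx eqxx nxy mulr1 mul0r.
have diag_partner r : Z r r = Z (partner r) (partner r).
  have := congr1 (fun M : 'M[F]_n => M r (partner r)) (cZ1 r).
  by rewrite /= mul_mx_delta mul_delta_mx !eqxx mulr1 mul1r.
have diag_first_half (i j : 'I_n) : (i < k)%N -> (j < k)%N -> Z i i = Z j j.
  move=> i_k j_k; have [->//|nij] := eqVneq i j.
  have := congr1 (fun M : 'M[F]_n => M i (partner j)) (cZ2 i j i_k j_k).
  rewrite /= mulmxDr mulmxDl !mxE_add !mul_mx_delta !mul_delta_mx !eqxx.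
  rewrite (negbTE nij) (offdiag i j nij) (inj_eq (can_inj partnerK)) eq_sym (negbTE nij).
  by rewrite !mulr0 mul0r !addr0 mulr1 mul1r (diag_partner j) => ->.
apply/matrixP=> x y; rewrite mxE; have [<-|nxy] := eqVneq x y; last first.
  by rewrite offdiag // mulr0n.
rewrite mulr1n; case: (ltnP x k) => x_k; first exact: diag_first_half.
by rewrite diag_partner; apply: diag_first_half; rewrite // partner_lt -leqNgt.
Qed.

Lemma symplectic_scalar (c : F) : symplectic c%:M -> c = 1 \/ c = -1.
Proof.
rewrite /symplectic tr_scalar_mx mul_scalar_mx mul_mx_scalar scalerA => spc.
have := congr1 (fun M : 'M[F]_n => M ord0 (partner ord0)) spc.
rewrite /= mxE J_row eqxx /Jsign /= mulr1 => cc_J.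
have /eqP : c ^+ 2 = 1 by rewrite expr2 -[RHS]cc_J mulr1.
by rewrite sqrf_eq1 => /orP[/eqP|/eqP]; [left|right].
Qed.

End SymplecticMatrices.

Section SymplecticGroup.
Local Open Scope group_scope.
Variables (F : finFieldType) (m : nat).
Local Notation Sp := (Sp_group F m.+1).

Definition Sp_elt (M : 'M[F]_m.*2.+2) (spM : symplectic M) : {'GL_(m.+1).*2[F]} :=
  Sub M (symplectic_unit spM).

Lemma Sp_elt_in M (spM : symplectic M) : Sp_elt spM \in Sp.
Proof. by rewrite inE /=; apply/eqP. Qed.

Definition Sp_J : {'GL_(m.+1).*2[F]} := Sp_elt (J_symplectic F m).

Lemma Sp_center_sign z : z \in 'Z(Sp) -> (GLval z = 1 \/ GLval z = -1)%R.
Proof.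
case/centerP=> Spz cSpz.
have commSp M (spM : symplectic M) : (GLval z *m M = M *m GLval z)%R.
  by have := congr1 GLval (cSpz _ (Sp_elt_in spM)); rewrite !GL_MxE.
have scalar_z := commute_transvections_scalar
  (fun r => commute_add1 (commSp _ (@transvection_symplectic F m r)))
  (fun i j i_k j_k => commute_add1 (commSp _ (@pair_transvection_symplectic F m i j i_k j_k))).
have spz : symplectic (GLval z) by move: Spz; rewrite inE => /eqP.
rewrite scalar_z in spz *.
by case: (symplectic_scalar spz) => ->; [left | right; rewrite raddfN].
Qed.

Lemma Sp_J_sqr : GLval (Sp_J ^+ 2) = (-1)%R.
Proof. by rewrite expgS expg1 GL_MxE J_sqr. Qed.

Lemma Sp_center_squares z :
  z \in 'Z(Sp) -> z ^+ 2 = 1 /\ exists2 g, g \in Sp & z = g ^+ 2.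
Proof.
move=> Zz; have [z1 | zN1] := Sp_center_sign Zz.
  have -> : z = 1 by apply: val_inj.
  by split; [rewrite expg1n | exists 1; rewrite ?group1 ?expg1n].
have -> : z = Sp_J ^+ 2 by apply: val_inj; rewrite [val z]zN1 [val _]Sp_J_sqr.
split; last by exists Sp_J; rewrite ?Sp_elt_in.
apply: val_inj; change (GLval (Sp_J ^+ 2 ^+ 2) = GLval 1).
rewrite expgS expg1 GL_MxE GL_1E Sp_J_sqr.
by rewrite mulmxN mulNmx mul1mx opprK.
Qed.

End SymplecticGroup.

Theorem mainTheorem4 (F : finFieldType) (m : nat) :
  covering_number (Sp_group F m.+1) = covering_number (PSp_group F m.+1).
Proof.
apply: covering_number_quotient; first exact: normal_norm (center_normal _).
exact: (central_powers_supplement_free (subxx _) (@Sp_center_squares F m)).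
Qed.
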